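(* Let $m\ge 1$ be fixed and let $\boldsymbol{\beta}\in\mathbb{R}^m$ be a fixed vector. For each $p$, let $A=A_p\in\mathbb{R}^{m\times p}$ and let $\Psi=\Psi_p\in\mathbb{R}^{p\times p}$ be symmetric positive definite, where as $p$ grows new columns are appended to $A$ and new rows and columns are appended to $\Psi$. Assume: (A.1) there are constants $0<k\le K<\infty$ such that all eigenvalues of $\Psi_p$ lie in $[k,K]$ for all $p$; (A.2) the limit $\lim_{p\to\infty}\frac{1}{p}A_pA_p^T\in\mathbb{R}^{m\times m}$ exists and has full rank $m$. Define $\boldsymbol{\gamma}_0=\boldsymbol{\gamma}_0(p)=(A_p^TA_p+\Psi_p)^{-1}A_p^T\boldsymbol{\beta}\in\mathbb{R}^p$. Then $\|\boldsymbol{\gamma}_0\|_1=\mathcal{O}(1)$ as $p\to\infty$.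
   Context: This arises from the joint latent variable model $y=\boldsymbol{\beta}^T\mathbf{f}+\epsilon$, $\mathbf{x}=A^T\mathbf{f}+\mathbf{e}$, with latent $\mathbf{f}\in\mathbb{R}^m$ (mean zero, identity covariance), $\epsilon$ mean zero with variance $\sigma^2$, $\mathbf{e}$ mean zero with covariance $\Psi$, all mutually uncorrelated; then $\boldsymbol{\gamma}_0^T\mathbf{x}$ is the best linear predictor of $y$ from $\mathbf{x}\in\mathbb{R}^p$. $\|\cdot\|_1$ denotes the $\ell_1$-norm. *)

From HB Require Import structures.
From mathcomp Require Import all_boot all_order all_algebra.
From mathcomp Require Import all_classical all_reals all_analysis.
Set Implicit Arguments. Unset Strict Implicit. Unset Printing Implicit Defensive.
Import Order.TTheory GRing.Theory Num.Theory.
Local Open Scope ring_scope.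

Definition sym_pd (R : realType) (n : nat) (M : 'M[R]_n) : Prop :=
  M^T = M /\ forall v : 'cV[R]_n, v != 0 -> 0 < (v^T *m M *m v) 0 0.

(* All (real) eigenvalues of M lie in [k, K]. For symmetric real matrices all
   eigenvalues are real, so this is the paper's condition. *)
Definition eigs_in (R : realType) (n : nat) (M : 'M[R]_n) (k K : R) : Prop :=
  forall a : R, eigenvalue M a -> k <= a <= K.

Definition drop_last_col (R : Type) (m p : nat) (B : 'M[R]_(m, p.+1)) : 'M[R]_(m, p) :=
  \matrix_(i < m, j < p) B i (widen_ord (leqnSn p) j).
Definition lead_block (R : Type) (p : nat) (B : 'M[R]_p.+1) : 'M[R]_p :=
  \matrix_(i < p, j < p) B (widen_ord (leqnSn p) i) (widen_ord (leqnSn p) j).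

Definition gamma0 (R : realType) (m p : nat) (A : 'M[R]_(m, p)) (Psi : 'M[R]_p)
  (beta : 'cV[R]_m) : 'cV[R]_p :=
  invmx (A^T *m A + Psi) *m (A^T *m beta).

Definition l1norm (R : realType) (p : nat) (v : 'cV[R]_p) : R :=
  \sum_(i < p) `|v i 0|.

From HB Require Import structures.
From mathcomp Require Import all_boot all_order all_algebra.
From mathcomp Require Import all_classical all_reals all_analysis.
From mathcomp Require Import ring lra.
Set Implicit Arguments. Unset Strict Implicit. Unset Printing Implicit Defensive.
Import Order.TTheory GRing.Theory Num.Theory.
Import numFieldNormedType.Exports.
Local Open Scope classical_set_scope.
Local Open Scope ring_scope.

(* gamma0 solves (A^T A + Psi) gamma0 = A^T beta.  Hence, for every solution x
   of A x = beta, Psi gamma0 = A^T A (x - gamma0), and expanding the Psi-energy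
   of x = gamma0 + (x - gamma0) shows that gamma0 has the smaller Psi-energy.
   Take for x the minimum-norm solution A^T (A A^T)^-1 beta.  By (A.2) the
   limit of A A^T / p is positive definite, so A A^T >= c p for large p and
   |x|^2 <= |beta|^2 / (c p).  With the eigenvalue bounds on Psi this gives
   k |gamma0|^2 <= K |beta|^2 / (c p), and Cauchy-Schwarz,
   |gamma0|_1^2 <= p |gamma0|^2, cancels the factor p.  The eigenvalue bounds
   become bounds on the quadratic form of Psi because the infimum of the
   Rayleigh quotient of a symmetric matrix is an eigenvalue. *)

Section QuadraticForm.
Variable R : realFieldType.

Definition bform n (M : 'M[R]_n) (u v : 'cV[R]_n) : R := (u^T *m M *m v) 0 0.
Definition sqnorm n (v : 'cV[R]_n) : R := (v^T *m v) 0 0.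
Definition abs_sum n (M : 'M[R]_n) : R := \sum_i \sum_j `|M i j|.

Lemma bform_sum n (M : 'M[R]_n) (u v : 'cV[R]_n) :
  bform M u v = \sum_i \sum_j u i 0 * M i j * v j 0.
Proof.
rewrite /bform !mxE; under eq_bigr => j _ do rewrite !mxE mulr_suml.
by rewrite exchange_big; apply: eq_bigr => i _; apply: eq_bigr => j _; rewrite mxE.
Qed.

Lemma sqnorm_sum n (v : 'cV[R]_n) : sqnorm v = \sum_i v i 0 ^+ 2.
Proof. by rewrite /sqnorm mxE; apply: eq_bigr => i _; rewrite mxE expr2. Qed.

Lemma sqnorm_bform1 n (v : 'cV[R]_n) : sqnorm v = bform 1%:M v v.
Proof. by rewrite /bform mulmx1. Qed.

Lemma sqnorm_ge0 n (v : 'cV[R]_n) : 0 <= sqnorm v.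
Proof. by rewrite sqnorm_sum; apply: sumr_ge0 => i _; rewrite sqr_ge0. Qed.

Lemma sqr_le_sqnorm n (v : 'cV[R]_n) i : v i 0 ^+ 2 <= sqnorm v.
Proof.
by rewrite sqnorm_sum (bigD1 i) //= lerDl; apply: sumr_ge0 => j _; rewrite sqr_ge0.
Qed.

Lemma sqnorm_gt0 n (v : 'cV[R]_n) : v != 0 -> 0 < sqnorm v.
Proof.
move=> v_neq0; have [i vi_neq0] : exists i, v i 0 != 0.
  apply/existsP; apply: contraNT v_neq0; rewrite negb_exists => /forallP v0.
  by apply/eqP/matrixP => i j; rewrite (ord1 j) mxE; apply/eqP/negPn/v0.
by apply: lt_le_trans (sqr_le_sqnorm v i); rewrite exprn_even_gt0.
Qed.

Lemma bformC n (M : 'M[R]_n) (u v : 'cV[R]_n) :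
  M^T = M -> bform M u v = bform M v u.
Proof.
move=> M_sym; rewrite !bform_sum exchange_big.
by apply: eq_bigr => i _; apply: eq_bigr => j _; rewrite -{1}M_sym mxE; ring.
Qed.

Lemma bformDl n (M : 'M[R]_n) (u w v : 'cV[R]_n) :
  bform M (u + w) v = bform M u v + bform M w v.
Proof. by rewrite /bform linearD /= !mulmxDl mxE. Qed.

Lemma bformDr n (M : 'M[R]_n) (u v w : 'cV[R]_n) :
  bform M u (v + w) = bform M u v + bform M u w.
Proof. by rewrite /bform !mulmxDr mxE. Qed.

Lemma bformZl n (M : 'M[R]_n) a (u v : 'cV[R]_n) :
  bform M (a *: u) v = a * bform M u v.
Proof. by rewrite /bform linearZ /= -!scalemxAl mxE. Qed.

Lemma bformZr n (M : 'M[R]_n) a (u v : 'cV[R]_n) :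
  bform M u (a *: v) = a * bform M u v.
Proof. by rewrite /bform -!scalemxAr mxE. Qed.

Lemma bformDM n (M N : 'M[R]_n) (u v : 'cV[R]_n) :
  bform (M + N) u v = bform M u v + bform N u v.
Proof. by rewrite /bform mulmxDr mulmxDl !mxE. Qed.

Lemma bformBM n (M N : 'M[R]_n) (u v : 'cV[R]_n) :
  bform (M - N) u v = bform M u v - bform N u v.
Proof. by rewrite /bform mulmxBr mulmxBl !mxE. Qed.

Lemma bformZM n (M : 'M[R]_n) a (u v : 'cV[R]_n) :
  bform (a *: M) u v = a * bform M u v.
Proof. by rewrite /bform -scalemxAr -scalemxAl mxE. Qed.

Lemma bform_scalar n a (v : 'cV[R]_n) : bform (a%:M : 'M[R]_n) v v = a * sqnorm v.
Proof. by rewrite -scalemx1 bformZM sqnorm_bform1. Qed.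

Lemma bform_trmul m n (X : 'M[R]_(m, n)) u :
  bform (X^T *m X) u u = sqnorm (X *m u).
Proof. by rewrite /bform /sqnorm trmx_mul !mulmxA. Qed.

Lemma bform_expand n (M : 'M[R]_n) (u v : 'cV[R]_n) t : M^T = M ->
  bform M (u + t *: v) (u + t *: v) =
  bform M u u + 2 * t * bform M u v + t ^+ 2 * bform M v v.
Proof.
move=> M_sym; rewrite !bformDl !bformDr !bformZl !bformZr (bformC v u M_sym).
ring.
Qed.

Lemma quadratic_ge0_discr (a b c : R) : 0 <= c ->
  (forall t, 0 <= a + 2 * t * b + t ^+ 2 * c) -> b ^+ 2 <= a * c.
Proof.
move=> c_ge0 q_ge0; have [c0|c_neq0] := eqVneq c 0.
  have [->|b_neq0] := eqVneq b 0; first by rewrite c0; lra.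
  have := q_ge0 (- (a + 1) / (2 * b)); rewrite c0 mulr0 addr0.
  by rewrite [_ * b](_ : _ = - (a + 1)); [lra | field].
have c_gt0 : 0 < c by rewrite lt_neqAle eq_sym c_neq0.
have := q_ge0 (- b / c).
rewrite [X in 0 <= X](_ : _ = (a * c - b ^+ 2) / c); last by field.
by rewrite pmulr_lge0 ?invr_gt0 // subr_ge0.
Qed.

Lemma psd_cauchy_schwarz n (M : 'M[R]_n) (u v : 'cV[R]_n) : M^T = M ->
  (forall w, 0 <= bform M w w) -> bform M u v ^+ 2 <= bform M u u * bform M v v.
Proof.
by move=> M_sym M_psd; apply: quadratic_ge0_discr => // t; rewrite -bform_expand.
Qed.

Lemma abs_sum_ge0 n (M : 'M[R]_n) : 0 <= abs_sum M.
Proof. by apply: sumr_ge0 => i _; apply: sumr_ge0. Qed.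

Lemma norm_bform_le n (M : 'M[R]_n) (v : 'cV[R]_n) :
  `|bform M v v| <= abs_sum M * sqnorm v.
Proof.
rewrite bform_sum /abs_sum mulr_suml; apply: le_trans (ler_norm_sum _ _ _) _.
apply: ler_sum => i _; rewrite mulr_suml; apply: le_trans (ler_norm_sum _ _ _) _.
apply: ler_sum => j _; rewrite !normrM mulrAC [leRHS]mulrC ler_wpM2r //.
have := sqr_le_sqnorm v i; have := sqr_le_sqnorm v j.
rewrite -(real_normK (num_real (v i 0))) -(real_normK (num_real (v j 0))).
have := sqr_ge0 (`|v i 0| - `|v j 0|); lra.
Qed.

Lemma pd_unitmx n (M : 'M[R]_n) :
  (forall v, v != 0 -> 0 < bform M v v) -> M \in unitmx.
Proof.
move=> M_pd; rewrite -row_free_unit -kermx_eq0; apply/rowV0P => w /sub_kermxP wM0.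
apply/eqP/negPn/negP => w_neq0; have := M_pd w^T; rewrite trmx_eq0 => /(_ w_neq0).
by rewrite /bform trmxK wM0 mul0mx mxE ltxx.
Qed.

Lemma psd_unitmx_coercive n (M : 'M[R]_n) :
  M^T = M -> (forall v, 0 <= bform M v v) -> M \in unitmx ->
  exists2 c, 0 < c & forall v, c * sqnorm v <= bform M v v.
Proof.
move=> M_sym M_psd M_unit; set S := abs_sum (invmx M).
have S_ge0 : 0 <= S by apply: abs_sum_ge0.
exists (S + 1)^-1 => [|v]; first by rewrite invr_gt0; lra.
(* Cauchy-Schwarz for v and M^-1 v: |v|^4 <= (v^T M v) (v^T M^-1 v). *)
set u := invmx M *m v.
have vu : bform M v u = sqnorm v by rewrite /bform -mulmxA mulKVmx.
have uu : bform M u u = bform (invmx M) v v.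
  by rewrite /bform -mulmxA mulKVmx // trmx_mul trmx_inv M_sym.
have := psd_cauchy_schwarz v u M_sym M_psd; rewrite vu uu.
have := le_trans (ler_norm _) (norm_bform_le (invmx M) v).
have := sqnorm_ge0 v; have := M_psd v.
rewrite -/S; set s := sqnorm v; set b := bform M v v => b_ge0 s_ge0 ub cs.
have S1_gt0 : 0 < S + 1 by rewrite ltr_wpDl.
rewrite ler_pdivrMl //.
have [s0|s_neq0] := eqVneq s 0.
  by rewrite s0; apply: mulr_ge0 => //; apply: ltW.
have s_gt0 : 0 < s by rewrite lt_neqAle eq_sym s_neq0.
have : s * s <= b * S * s.
  by rewrite -expr2 -mulrA; apply: le_trans cs _; rewrite ler_wpM2l.
rewrite ler_pM2r // => sbS; apply: le_trans sbS _.
by rewrite mulrC ler_wpM2r // lerDl.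
Qed.

End QuadraticForm.

Section Rayleigh.
Variable R : realType.

Definition rayleigh_quotients n (M : 'M[R]_n) : set R :=
  [set bform M v v / sqnorm v | v in [set v | v != 0]].

Lemma rayleigh_quotients_lbound n (M : 'M[R]_n) :
  lbound (rayleigh_quotients M) (- abs_sum M).
Proof.
move=> _ [v /= v_neq0 <-]; rewrite ler_pdivlMr ?sqnorm_gt0 // mulNr lerNl.
by apply: le_trans (norm_bform_le M v); rewrite -normrN ler_norm.
Qed.

Lemma rayleigh_quotients_neq0 n (M : 'M[R]_n) :
  (0 < n)%N -> rayleigh_quotients M !=set0.
Proof.
move=> n_gt0; set one : 'cV[R]_n := const_mx 1.
have one_neq0 : one != 0.
  by apply/eqP => /matrixP /(_ (Ordinal n_gt0) 0) /eqP; rewrite !mxE oner_eq0.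
by exists (bform M one one / sqnorm one), one.
Qed.

Lemma inf_rayleigh_le n (M : 'M[R]_n) v :
  inf (rayleigh_quotients M) * sqnorm v <= bform M v v.
Proof.
have [->|v_neq0] := eqVneq v 0.
  by rewrite /sqnorm /bform !mulmx0 !mxE mulr0.
rewrite -ler_pdivlMr ?sqnorm_gt0 //; apply: ge_inf; last by exists v.
by exists (- abs_sum M); apply: rayleigh_quotients_lbound.
Qed.

Lemma inf_rayleigh_eigenvalue n (M : 'M[R]_n) : M^T = M -> (0 < n)%N ->
  eigenvalue M (inf (rayleigh_quotients M)).
Proof.
move=> M_sym n_gt0; set mu := inf _; apply: contraT => not_eig.
have M'_unit : M - mu%:M \in unitmx.
  by move: not_eig; rewrite /eigenvalue /eigenspace negbK kermx_eq0 row_free_unit.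
have M'_sym : (M - mu%:M)^T = M - mu%:M by rewrite linearB /= tr_scalar_mx M_sym.
have M'_psd v : 0 <= bform (M - mu%:M) v v.
  by rewrite bformBM bform_scalar subr_ge0 inf_rayleigh_le.
have [c c_gt0 M'_coercive] := psd_unitmx_coercive M'_sym M'_psd M'_unit.
(* An invertible M - mu would be coercive and push the infimum up to mu + c. *)
suff : mu + c <= mu by rewrite gerDl leNgt c_gt0.
apply: lb_le_inf; first exact: rayleigh_quotients_neq0.
move=> _ [v /= v_neq0 <-]; rewrite ler_pdivlMr ?sqnorm_gt0 //.
by have := M'_coercive v; rewrite bformBM bform_scalar lerBrDr -mulrDl addrC.
Qed.

Lemma bform_ge_of_eigenvalue_ge n (M : 'M[R]_n) k v : M^T = M ->
  (forall a, eigenvalue M a -> k <= a) -> k * sqnorm v <= bform M v v.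
Proof.
case: n M v => [|n] M v M_sym eig_ge.
  by rewrite flatmx0 /sqnorm /bform !mulmx0 !mxE mulr0.
apply: le_trans (inf_rayleigh_le M v); rewrite ler_wpM2r ?sqnorm_ge0 //.
exact/eig_ge/inf_rayleigh_eigenvalue.
Qed.

Lemma eigenvalueN n (M : 'M[R]_n) a : eigenvalue (- M) a -> eigenvalue M (- a).
Proof.
move=> /eigenvalueP [v vM v_neq0]; apply/eigenvalueP; exists v => //.
by rewrite scaleNr -vM mulmxN opprK.
Qed.

Lemma bform_le_of_eigenvalue_le n (M : 'M[R]_n) K v : M^T = M ->
  (forall a, eigenvalue M a -> a <= K) -> bform M v v <= K * sqnorm v.
Proof.
move=> M_sym eig_le; have NM_sym : (- M)^T = - M by rewrite linearN /= M_sym.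
have := bform_ge_of_eigenvalue_ge v NM_sym (k := - K).
have -> : bform (- M) v v = - bform M v v by rewrite -scaleN1r bformZM mulN1r.
rewrite mulNr lerN2; apply=> a /eigenvalueN.
by rewrite lerNl => /eig_le.
Qed.

End Rayleigh.

Section Gamma0.
Variable R : realType.

Lemma exists_solution_sqnorm_le m p (A : 'M[R]_(m, p)) (beta : 'cV[R]_m) c :
  0 < c -> (forall v, c * sqnorm v <= bform (A *m A^T) v v) ->
  exists2 x, A *m x = beta & c * sqnorm x <= sqnorm beta.
Proof.
move=> c_gt0 AAt_coercive.
have AAt_unit : A *m A^T \in unitmx.
  apply: pd_unitmx => v v_neq0; apply: lt_le_trans (AAt_coercive v).
  by rewrite mulr_gt0 ?sqnorm_gt0.
set w := invmx (A *m A^T) *m beta.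
have AAtw : A *m A^T *m w = beta by rewrite mulKVmx.
exists (A^T *m w); first by rewrite mulmxA.
set t := bform 1%:M w beta.
have w_form : bform (A *m A^T) w w = t by rewrite /t /bform -mulmxA AAtw mulmx1.
have -> : sqnorm (A^T *m w) = t by rewrite -w_form -bform_trmul trmxK.
have cw_le : c * (c * sqnorm w) <= c * t by rewrite ler_pM2l // -w_form.
have := sqnorm_ge0 (beta + (- c) *: w).
rewrite sqnorm_bform1 bform_expand ?trmx1 // -!sqnorm_bform1.
rewrite (bformC beta w (trmx1 _ _)) -/t.
move: cw_le; rewrite sqrrN expr2 -mulrA; lra.
Qed.

Lemma gamma0_energy_le m p (A : 'M[R]_(m, p)) (Psi : 'M[R]_p) beta x :
  Psi^T = Psi -> (forall v, 0 <= bform Psi v v) -> A^T *m A + Psi \in unitmx ->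
  A *m x = beta ->
  bform Psi (gamma0 A Psi beta) (gamma0 A Psi beta) <= bform Psi x x.
Proof.
move=> Psi_sym Psi_psd H_unit Ax; set g := gamma0 A Psi beta; set d := x - g.
have Psi_g : Psi *m g = A^T *m A *m d.
  have : (A^T *m A + Psi) *m g = A^T *m A *m x.
    by rewrite /g /gamma0 mulKVmx // -Ax mulmxA.
  by rewrite mulmxDl /d mulmxBr => <-; rewrite addrC addKr.
have cross : bform Psi g d = sqnorm (A *m d).
  by rewrite bformC // -bform_trmul /bform -mulmxA Psi_g !mulmxA.
have -> : x = g + 1 *: d by rewrite scale1r addrC subrK.
rewrite bform_expand // cross expr1n mul1r -addrA lerDl.
by apply: addr_ge0 => //; rewrite mulr_ge0 ?sqnorm_ge0.
Qed.

Lemma gamma0_sqnorm_le m p (A : 'M[R]_(m, p)) (Psi : 'M[R]_p) beta k K c :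
  0 < k -> 0 <= K -> 0 < c -> Psi^T = Psi ->
  (forall v, k * sqnorm v <= bform Psi v v) ->
  (forall v, bform Psi v v <= K * sqnorm v) ->
  (forall v, c * sqnorm v <= bform (A *m A^T) v v) ->
  k * c * sqnorm (gamma0 A Psi beta) <= K * sqnorm beta.
Proof.
move=> k_gt0 K_ge0 c_gt0 Psi_sym Psi_ge Psi_le AAt_coercive.
have [x Ax cx_le] := exists_solution_sqnorm_le beta c_gt0 AAt_coercive.
have Psi_psd v : 0 <= bform Psi v v.
  by apply: le_trans (Psi_ge v); rewrite mulr_ge0 ?sqnorm_ge0 ?ltW.
have H_unit : A^T *m A + Psi \in unitmx.
  apply: pd_unitmx => v v_neq0; rewrite bformDM bform_trmul.
  apply: ltr_wpDl (sqnorm_ge0 _) (lt_le_trans _ (Psi_ge v)).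
  by rewrite mulr_gt0 ?sqnorm_gt0.
have energy := gamma0_energy_le Psi_sym Psi_psd H_unit Ax.
rewrite [k * c]mulrC -mulrA; apply: le_trans (_ : c * (K * sqnorm x) <= _).
  by rewrite ler_pM2l //; apply: le_trans (Psi_ge _) (le_trans energy (Psi_le x)).
by rewrite mulrCA; apply: ler_wpM2l.
Qed.

Lemma l1norm_sqr_le n (x : 'cV[R]_n) : l1norm x ^+ 2 <= n%:R * sqnorm x.
Proof.
set a := \col_i `|x i 0|; set one : 'cV[R]_n := const_mx 1.
have sym1 : (1%:M : 'M[R]_n)^T = 1%:M by rewrite trmx1.
have psd1 (v : 'cV[R]_n) : 0 <= bform 1%:M v v by rewrite -sqnorm_bform1 sqnorm_ge0.
have a_one : bform 1%:M a one = l1norm x.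
  by rewrite /bform mulmx1 mxE; apply: eq_bigr => i _; rewrite !mxE mulr1.
have one_one : sqnorm one = n%:R.
  rewrite sqnorm_sum (eq_bigr (fun=> 1)) => [|i _]; last by rewrite mxE expr1n.
  by rewrite sumr_const card_ord.
have a_a : sqnorm a = sqnorm x.
  by rewrite !sqnorm_sum; apply: eq_bigr => i _; rewrite mxE real_normK ?num_real.
have := psd_cauchy_schwarz a one sym1 psd1.
by rewrite -!sqnorm_bform1 a_one one_one a_a mulrC.
Qed.

Lemma l1norm_gamma0_le m p (A : 'M[R]_(m, p)) (Psi : 'M[R]_p) beta k K c :
  (0 < p)%N -> 0 < k -> 0 <= K -> 0 < c -> Psi^T = Psi ->
  (forall v, k * sqnorm v <= bform Psi v v) ->
  (forall v, bform Psi v v <= K * sqnorm v) ->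
  (forall v, p%:R * c * sqnorm v <= bform (A *m A^T) v v) ->
  l1norm (gamma0 A Psi beta) <= Num.sqrt (K * sqnorm beta / (k * c)).
Proof.
move=> p_gt0 k_gt0 K_ge0 c_gt0 Psi_sym Psi_ge Psi_le AAt_coercive.
have pc_gt0 : 0 < p%:R * c by rewrite mulr_gt0 ?ltr0n.
have := gamma0_sqnorm_le beta k_gt0 K_ge0 pc_gt0 Psi_sym Psi_ge Psi_le
  AAt_coercive.
set g := gamma0 A Psi beta => g_le.
have l1_ge0 : 0 <= l1norm g by apply: sumr_ge0.
have kc_gt0 : 0 < k * c by rewrite mulr_gt0.
rewrite -(ger0_norm l1_ge0) -sqrtr_sqr ler_sqrt; last first.
  by rewrite divr_ge0 ?mulr_ge0 ?sqnorm_ge0 // ltW.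
rewrite ler_pdivlMr //; apply: le_trans (_ : p%:R * sqnorm g * (k * c) <= _).
  by rewrite ler_pM2r // l1norm_sqr_le.
by rewrite (_ : _ * (k * c) = k * (p%:R * c) * sqnorm g) //; ring.
Qed.

End Gamma0.

Lemma cvg_sumr (R : realFieldType) (T : Type) (F : set_system T)
    (FF : Filter F) (I : Type) (r : seq I) (f : I -> T -> R) (l : I -> R) :
  (forall i, f i x @[x --> F] --> l i) ->
  \sum_(i <- r) f i x @[x --> F] --> \sum_(i <- r) l i.
Proof. by move=> f_cvg; apply: cvg_big => //; exact: add_continuous. Qed.

Section EntrywiseLimit.
Variables (R : realFieldType) (n : nat) (M : nat -> 'M[R]_n) (L : 'M[R]_n).
Hypothesis M_cvg : forall i j, M p i j @[p --> \oo] --> L i j.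

Lemma cvg_bform u v : bform (M p) u v @[p --> \oo] --> bform L u v.
Proof.
under eq_cvg do rewrite bform_sum; rewrite bform_sum.
apply: cvg_sumr => i; apply: cvg_sumr => j.
exact: (cvgM (cvgM (cvg_cst _) (@M_cvg i j)) (cvg_cst _)).
Qed.

Lemma cvg_abs_sum_sub : abs_sum (L - M p) @[p --> \oo] --> 0.
Proof.
have -> : (fun p => abs_sum (L - M p)) =
    (fun p => \sum_i \sum_j `|L i j - M p i j|).
  by apply/funext => p; apply: eq_bigr => i _; apply: eq_bigr => j _; rewrite !mxE.
rewrite [X in _ --> X](_ : _ = \sum_i \sum_j `|L i j - L i j|); last first.
  by rewrite big1 // => i _; rewrite big1 // => j _; rewrite subrr normr0.
apply: cvg_sumr => i; apply: cvg_sumr => j.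
exact: (cvg_norm (cvgB (cvg_cst _) (@M_cvg i j))).
Qed.

Lemma limit_sym : (forall p, (M p)^T = M p) -> L^T = L.
Proof.
move=> M_sym; apply/matrixP => i j; rewrite mxE.
apply: (cvg_unique (@norm_hausdorff _ _) (@M_cvg j i)).
suff -> : (fun p => M p j i) = (fun p => M p i j) by apply: M_cvg.
by apply/funext => p; rewrite -{1}M_sym mxE.
Qed.

Lemma limit_psd : (forall p v, 0 <= bform (M p) v v) -> forall v, 0 <= bform L v v.
Proof.
move=> M_psd v; apply: (cvgr_to_ge (@cvg_bform v v)).
by near=> p; apply: M_psd.
Unshelve. all: by end_near.
Qed.

Lemma limit_unitmx_coercive : (forall p, (M p)^T = M p) ->
  (forall p v, 0 <= bform (M p) v v) -> L \in unitmx ->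
  exists2 c, 0 < c & \forall p \near \oo, forall v, c * sqnorm v <= bform (M p) v v.
Proof.
move=> M_sym M_psd L_unit.
have [c c_gt0 L_coercive] :=
  psd_unitmx_coercive (limit_sym M_sym) (limit_psd M_psd) L_unit.
have half_gt0 : 0 < c / 2 by rewrite divr_gt0.
exists (c / 2) => //.
have small := cvgr_lt _ cvg_abs_sum_sub _ half_gt0.
near=> p => v.
have small_p : abs_sum (L - M p) <= c / 2.
  by apply: ltW; near: p; exact: small.
have := L_coercive v; rewrite -(subrK (M p) L) bformDM.
have := le_trans (ler_norm _) (norm_bform_le (L - M p) v).
have := ler_wpM2r (sqnorm_ge0 v) small_p.
lra.
Unshelve. all: by end_near.
Qed.

End EntrywiseLimit.

Theorem proposition1 (R : realType) (m : nat) (hm : (0 < m)%N)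
  (beta : 'cV[R]_m)
  (A : forall p : nat, 'M[R]_(m, p)) (Psi : forall p : nat, 'M[R]_p)
  (hAnest : forall p : nat, drop_last_col (A p.+1) = A p)
  (hPnest : forall p : nat, lead_block (Psi p.+1) = Psi p)
  (hPpd : forall p : nat, sym_pd (Psi p))
  (k K : R) (hk : 0 < k) (hkK : k <= K)
  (hA1 : forall p : nat, eigs_in (Psi p) k K)
  (L : 'M[R]_m)
  (hA2lim : forall i j : 'I_m,
     ((fun p : nat => (p%:R)^-1 * (A p *m (A p)^T) i j) : R^nat) @ \oo --> (L i j : R))
  (hA2rank : \rank L = m) :
  exists C : R, exists N : nat, forall p : nat, (N <= p)%N ->
    l1norm (gamma0 (A p) (Psi p) beta) <= C.
Proof.
pose M p : 'M[R]_m := p%:R^-1 *: (A p *m (A p)^T).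
have M_cvg i j : M p i j @[p --> \oo] --> L i j.
  suff -> : (fun p => M p i j) = (fun p => p%:R^-1 * (A p *m (A p)^T) i j) by [].
  by apply/funext => p; rewrite mxE.
have M_sym p : (M p)^T = M p by rewrite linearZ /= trmx_mul trmxK.
have M_psd p v : 0 <= bform (M p) v v.
  rewrite bformZM -{1}(trmxK (A p)) bform_trmul.
  by rewrite mulr_ge0 ?invr_ge0 ?sqnorm_ge0.
have L_unit : L \in unitmx by rewrite -row_free_unit /row_free hA2rank.
have [c c_gt0 [N _ M_coercive]] :=
  limit_unitmx_coercive M_cvg M_sym M_psd L_unit.
exists (Num.sqrt (K * sqnorm beta / (k * c))), N.+1 => p ltNp.
have p_gt0 : (0 < p)%N := leq_ltn_trans (leq0n N) ltNp.
have [Psi_sym _] := hPpd p.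
apply: l1norm_gamma0_le => //.
- exact: le_trans (ltW hk) hkK.
- by move=> v; apply: bform_ge_of_eigenvalue_ge => // a /hA1 /andP[].
- by move=> v; apply: bform_le_of_eigenvalue_le => // a /hA1 /andP[].
move=> v; have := M_coercive p (ltnW ltNp) v.
by rewrite bformZM ler_pdivlMl ?ltr0n // mulrA.
Qed.
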